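(* Let $(\mathcal B,<)$ be a monoidal poset with unique maximal element $B_0$. (i) For each $B\in\mathcal B$, each element $w\in W$ of minimal length such that $B=wB_0$, and each node $i$ with $l(r_iw)<l(w)$, we have $r_iB>B$. (ii) For each $B\in\mathcal B$, if $w,w'\in W$ are of minimal length such that $B=wB_0=w'B_0$, then $l(w)=l(w')$, and for each node $i$ with $r_iB>B$ there is $w''\in W$ of length $l(w)$ such that $B=w''B_0$ and $l(r_iw'')<l(w'')$.
   Context: Setting: $M$ is a spherical simply laced Coxeter diagram with nodes $1,\dots,n$ ($i\not\sim j$ means distinct nodes not joined by an edge, or equal); $W$ its Weyl group with length function $l$, positive roots $\Phi^+$, fundamental roots $\alpha_i$, reflections $r_i$, roots of squared length $2$; height $\mathrm{ht}(\sum a_k\alpha_k)=\sum a_k$. For a set $B$ of mutually orthogonal positive roots, $wB=\Phi^+\cap\{\pm w\beta:\beta\in B\}$. A $W$-orbit $\mathcal B$ of such sets is admissible if for every $B\in\mathcal B$, all nodes $i\not\sim j$ and root $\gamma$ with $\gamma,\gamma-\alpha_i+\alpha_j\in B$, $r_iB=r_jB$. For $B,C\in\mathcal B$ write $B\prec C$ if $B\ne C$ and the minimal height of an element of $B\setminus C$ is strictly smaller than the minimal height of an element of $C\setminus B$. For admissible $\mathcal B$, the monoidal poset $(\mathcal B,<)$ is $\mathcal B$ with the partial order $<$ given by the transitive closure of $\{(B,r_jB): B\in\mathcal B,\ j\text{ a node},\ B\prec r_jB\}$; $>$ is the reverse relation. Such a poset has a unique maximal element. *)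

From HB Require Import structures.
From mathcomp Require Import all_boot all_order all_algebra.
From mathcomp Require Import finmap.
Set Implicit Arguments. Unset Strict Implicit. Unset Printing Implicit Defensive.
Import Order.TTheory GRing.Theory Num.Theory.
Local Open Scope ring_scope.
Local Open Scope fset_scope.

(* Root lattice Z^n, vectors as integer row vectors; the diagram M is given by
   a relation [adj] on the nodes 'I_n (nodes 1..n of the paper = 'I_n). *)
Definition vec (n : nat) := 'rV[int]_n.

Section Weyl.
Variables (n : nat) (adj : rel 'I_n).

Definition cartan : 'M[int]_n :=
  \matrix_(i, j) (if i == j then 2 else if adj i j then -1 else 0).

(* The W-invariant bilinear bform, roots having squared length 2. *)
Definition bform (x y : vec n) : int := (x *m cartan *m y^T) 0 0.

Definition alpha (i : 'I_n) : vec n := \row_j ((i == j)%:R : int).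

Definition wrefl (i : 'I_n) (x : vec n) : vec n := x - bform x (alpha i) *: alpha i.

(* A word [:: i1; ...; ik] denotes r_{i1} ... r_{ik} in W. *)
Definition wact (s : seq 'I_n) (x : vec n) : vec n := foldr wrefl x s.

(* Equality of elements of W (via the faithful action on the root lattice;
   a linear map is determined by its values on the basis alpha_j). *)
Definition weqb (s t : seq 'I_n) : bool :=
  [forall j, wact s (alpha j) == wact t (alpha j)].

Lemma len_ex (s : seq 'I_n) :
  exists k, [exists t : k.-tuple 'I_n, weqb t s].
Proof.
exists (size s); apply/existsP; exists (in_tuple s).
by apply/forallP => j /=.
Qed.

Definition wlen (s : seq 'I_n) : nat := ex_minn (len_ex s).

Definition is_root (x : vec n) : Prop := exists s i, wact s (alpha i) = x.

Definition rpos (x : vec n) : bool := [forall j, 0 <= x 0 j].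

Definition rht (x : vec n) : int := \sum_j x 0 j.

(* w B = Phi^+ cap {+- w beta : beta in B}; for a root beta exactly one of
   +- w beta is positive. *)
Definition wact_set (s : seq 'I_n) (B : {fset vec n}) : {fset vec n} :=
  [fset (if rpos (wact s b) then wact s b else - wact s b) | b in B].

Definition orth_pos_roots (B : {fset vec n}) : Prop :=
  (forall b, b \in B -> is_root b /\ rpos b) /\
  (forall b b', b \in B -> b' \in B -> b != b' -> bform b b' = 0).

Definition in_Borbit (B0 B : {fset vec n}) : Prop := exists s, B = wact_set s B0.

Definition nonadj (i j : 'I_n) : bool := (i == j) || ~~ adj i j.

Definition admissible (B0 : {fset vec n}) : Prop :=
  forall B, in_Borbit B0 B ->
  forall (i j : 'I_n) (g : vec n), nonadj i j ->
    g \in B -> (g - alpha i + alpha j)%R \in B ->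
    wact_set [:: i] B = wact_set [:: j] B.

Definition mprec (B C : {fset vec n}) : Prop :=
  B != C /\ (exists c, c \in C `\` B) /\
  exists b, b \in B `\` C /\ forall c, c \in C `\` B -> rht b < rht c.

Definition mstep (B0 B C : {fset vec n}) : Prop :=
  in_Borbit B0 B /\ exists j, C = wact_set [:: j] B /\ mprec B C.

Inductive mlt (B0 : {fset vec n}) : {fset vec n} -> {fset vec n} -> Prop :=
| mlt_step B C : mstep B0 B C -> mlt B0 B C
| mlt_trans B C D : mlt B0 B C -> mlt B0 C D -> mlt B0 B D.

Definition minimal_for (B0 B : {fset vec n}) (s : seq 'I_n) : Prop :=
  wact_set s B0 = B /\ forall t, wact_set t B0 = B -> (wlen s <= wlen t)%N.

End Weyl.

(* For B in the orbit of B0, let the depth of B be the least length of a word w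
   with w B0 = B.  The heart of the proof is that the depth grades the monoidal
   order: if r_i B <> B, the depths of B and r_i B differ by one, and B < r_i B
   exactly when r_i B is the shallower of the two.  This is proved by induction
   on the depth.  If B < r_i B but r_i B were not shallower, let j be the first
   letter of a shortest word for B, so that B < r_j B as well.  Since r_i and
   r_j commute or braid, an analysis of the roots of B with pairing -1, 0, 1
   against alpha_i and alpha_j (and admissibility in the commuting case) shows
   r_j B < r_i r_j B, and also r_i r_j B < r_j r_i r_j B in the braid case.  By
   induction each of these steps lowers the depth by one, which yields a word of
   length depth(B) for r_i B, a contradiction.  At depth 0 it contradicts the
   maximality of B0.  Both parts of the theorem then follow, since a minimal
   word for B has length depth(B). *)

From HB Require Import structures.
From mathcomp Require Import all_boot all_order all_algebra.
From mathcomp Require Import finmap zify ring.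
Import Order.TTheory GRing.Theory Num.Theory.
Set Implicit Arguments. Unset Strict Implicit. Unset Printing Implicit Defensive.
Local Open Scope fset_scope.
Local Open Scope ring_scope.

Lemma fset_arg_min (T : choiceType) (A : {fset T}) (P : pred T) (f : T -> int) x :
  x \in A -> P x -> exists2 m, m \in A /\ P m & forall y, y \in A -> P y -> f m <= f y.
Proof.
move=> xA Px; pose x0 : A := [` xA].
case: (@arg_minP _ _ A x0 (P \o val) (f \o val)) => //= m Pm m_min.
by exists (val m) => [|y yA Py]; [split; [exact: valP|] | exact: (m_min [` yA])].
Qed.

Section RootSystem.
Variables (n : nat) (adj : rel 'I_n).
Hypothesis adj_sym : symmetric adj.
Implicit Types (x y z u v : vec n) (i j : 'I_n) (a : int) (s t : seq 'I_n).

Local Notation bf := (bform adj).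
Local Notation r := (wrefl adj).
Local Notation "[< x | i >]" := (bform adj x (alpha i)) (format "[< x  |  i >]").

(** * Simple reflections and the invariant form *)

Lemma cartanE i j : cartan adj i j = if i == j then 2 else if adj i j then -1 else 0.
Proof. by rewrite mxE. Qed.

Lemma cartanC i j : cartan adj i j = cartan adj j i.
Proof. by rewrite !cartanE eq_sym adj_sym. Qed.

Lemma cartan_diag i : cartan adj i i = 2.
Proof. by rewrite cartanE eqxx. Qed.

Lemma bformC x y : bf x y = bf y x.
Proof.
have cartan_tr : (cartan adj)^T = cartan adj by apply/matrixP => i j; rewrite mxE cartanC.
rewrite /bform -(trmxK (x *m cartan adj *m y^T)) [X in X = _]mxE.
by rewrite !trmx_mul trmxK cartan_tr mulmxA.
Qed.

Lemma bformDl x y z : bf (x + y) z = bf x z + bf y z.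
Proof. by rewrite /bform !mulmxDl mxE. Qed.

Lemma bformZl a x z : bf (a *: x) z = a * bf x z.
Proof. by rewrite /bform -!scalemxAl mxE. Qed.

Lemma bformNl x z : bf (- x) z = - bf x z.
Proof. by rewrite -scaleN1r bformZl mulN1r. Qed.

Lemma bformBl x y z : bf (x - y) z = bf x z - bf y z.
Proof. by rewrite bformDl bformNl. Qed.

Lemma bformDr x y z : bf z (x + y) = bf z x + bf z y.
Proof. by rewrite bformC bformDl !(bformC z). Qed.

Lemma bformNr x z : bf z (- x) = - bf z x.
Proof. by rewrite bformC bformNl bformC. Qed.

Lemma bformBr x y z : bf z (x - y) = bf z x - bf z y.
Proof. by rewrite bformDr bformNr. Qed.

Lemma bform0l z : bf 0 z = 0.
Proof. by rewrite /bform !mul0mx mxE. Qed.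

Lemma bform_alpha i j : bf (alpha i) (alpha j) = cartan adj i j.
Proof.
have alpha_delta k : alpha k = delta_mx 0 k by apply/rowP => m; rewrite !mxE eq_sym.
by rewrite /bform !alpha_delta -rowE trmx_delta -colE !mxE.
Qed.

Lemma bform_alpha_diag i : bf (alpha i) (alpha i) = 2.
Proof. by rewrite bform_alpha cartan_diag. Qed.

Lemma bform_wrefll i x y : bf (r i x) y = bf x y - [< x | i >] * [< y | i >].
Proof. by rewrite /wrefl bformBl bformZl (bformC (alpha i)). Qed.

Lemma pairing_wrefl i (k : 'I_n) x : [< r i x | k >] = [< x | k >] - [< x | i >] * cartan adj i k.
Proof. by rewrite /wrefl bformBl bformZl bform_alpha. Qed.

Lemma pairing_wrefl_diag i x : [< r i x | i >] = - [< x | i >].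
Proof. by rewrite pairing_wrefl cartan_diag; ring. Qed.

Lemma bform_wrefl i x y : bf (r i x) (r i y) = bf x y.
Proof. by rewrite bform_wrefll bformC bform_wrefll pairing_wrefl_diag bformC; ring. Qed.

Lemma wreflK i : involutive (r i).
Proof.
by move=> x; rewrite {1}/wrefl pairing_wrefl_diag scaleNr opprK /wrefl subrK.
Qed.

Lemma wreflD i x y : r i (x + y) = r i x + r i y.
Proof. by rewrite /wrefl bformDl scalerDl opprD addrACA. Qed.

Lemma wreflZ i a x : r i (a *: x) = a *: r i x.
Proof. by rewrite /wrefl bformZl scalerBr scalerA. Qed.

Lemma wreflN i x : r i (- x) = - r i x.
Proof. by rewrite -!scaleN1r wreflZ. Qed.

Lemma wrefl_id i x : [< x | i >] = 0 -> r i x = x.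
Proof. by rewrite /wrefl => ->; rewrite scale0r subr0. Qed.

Lemma wrefl_alpha i : r i (alpha i) = - alpha i.
Proof. by rewrite /wrefl bform_alpha_diag scaler_nat mulr2n opprD addrA subrr sub0r. Qed.

Lemma wrefl_comm i j x : cartan adj i j = 0 -> r i (r j x) = r j (r i x).
Proof.
move=> cij; rewrite [LHS]/wrefl [RHS]/wrefl !pairing_wrefl cij cartanC cij !mulr0 !subr0.
by rewrite /wrefl addrAC.
Qed.

Lemma wrefl_braid i j x : cartan adj i j = -1 -> r i (r j (r i x)) = r j (r i (r j x)).
Proof.
move=> cij; have cji : cartan adj j i = -1 by rewrite cartanC.
rewrite /wrefl !(bformBl, bformZl, bform_alpha) cij cji !cartan_diag.
by apply/rowP => m; rewrite !mxE; ring.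
Qed.

Lemma rhtD x y : rht (x + y) = rht x + rht y.
Proof. by rewrite /rht -big_split; apply: eq_bigr => m _; rewrite mxE. Qed.

Lemma rhtN x : rht (- x) = - rht x.
Proof. by rewrite /rht -sumrN; apply: eq_bigr => m _; rewrite mxE. Qed.

Lemma rhtB x y : rht (x - y) = rht x - rht y.
Proof. by rewrite rhtD rhtN. Qed.

Lemma rht_alpha i : rht (alpha i) = 1.
Proof.
rewrite /rht (bigD1 i) //= big1 ?addr0 => [|m mi]; first by rewrite mxE eqxx.
by rewrite mxE eq_sym (negPf mi).
Qed.

Lemma rhtZ a x : rht (a *: x) = a * rht x.
Proof. by rewrite /rht mulr_sumr; apply: eq_bigr => m _; rewrite mxE. Qed.

Lemma rht_wrefl i x : rht (r i x) = rht x - [< x | i >].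
Proof. by rewrite /wrefl rhtB rhtZ rht_alpha mulr1. Qed.

Lemma wactD s x y : wact adj s (x + y) = wact adj s x + wact adj s y.
Proof. by elim: s => //= i s ->; rewrite wreflD. Qed.

Lemma wactZ s a x : wact adj s (a *: x) = a *: wact adj s x.
Proof. by elim: s => //= i s ->; rewrite wreflZ. Qed.

Lemma wact0 s : wact adj s 0 = 0.
Proof. by rewrite -(scale0r 0) wactZ !scale0r. Qed.

Lemma bform_wact s x y : bf (wact adj s x) (wact adj s y) = bf x y.
Proof. by elim: s => //= i s <-; rewrite bform_wrefl. Qed.

Lemma weqb_wact s t : weqb adj s t -> wact adj s =1 wact adj t.
Proof.
move=> /forallP eq_st x; rewrite (row_sum_delta x).
rewrite !(big_morph (wact adj _) (wactD _) (wact0 _)); apply: eq_bigr => j _.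
have -> : delta_mx 0 j = alpha j by apply/rowP => m; rewrite !mxE eq_sym.
by rewrite !wactZ (eqP (eq_st j)).
Qed.

Lemma wlen_le s t : weqb adj t s -> (wlen adj s <= size t)%N.
Proof.
by move=> eq_ts; rewrite /wlen; case: ex_minnP => m _; apply; apply/existsP; exists (in_tuple t).
Qed.

Lemma wlen_size s : (wlen adj s <= size s)%N.
Proof. by apply: wlen_le; apply/forallP. Qed.

Lemma wlen_witness s : exists t : (wlen adj s).-tuple 'I_n, weqb adj t s.
Proof. by rewrite /wlen; case: ex_minnP => m /existsP [t eq_ts] _; exists t. Qed.

(** * Roots *)

Hypothesis spherical : forall x : vec n, x != 0 -> 0 < bf x x.

Lemma bform_diag_even x : bf x x = 2 * (x *m \matrix_(i, j)
  (if i == j then 1 else if (i < j)%N && adj i j then -1 else 0) *m x^T) 0 0.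
Proof.
set U := \matrix_(i, j) _; rewrite /bform.
have -> : cartan adj = U + U^T.
  apply/matrixP => i j; rewrite !mxE eq_sym; case: eqVneq => [//|ij].
  case: (ltngtP i j) => [||/val_inj eq_ij]; last by rewrite eq_ij eqxx in ij.
    by case: (adj i j).
  by rewrite adj_sym; case: (adj j i).
rewrite mulmxDr mulmxDl mxE.
have -> : (x *m U^T *m x^T) 0 0 = ((x *m U^T *m x^T)^T) 0 0 by rewrite [RHS]mxE.
by rewrite !trmx_mul !trmxK mulmxA; ring.
Qed.

Lemma bform_diag_ge2 x : x != 0 -> 2 <= bf x x.
Proof. by move/spherical; rewrite bform_diag_even; lia. Qed.

Lemma bformE x y : bf x y = \sum_j \sum_i x 0 i * cartan adj i j * y 0 j.
Proof.
rewrite /bform mxE; apply: eq_bigr => j _; rewrite !mxE big_distrl.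
by apply: eq_bigr => i _; rewrite !mxE.
Qed.

Lemma root_sign x : bf x x = 2 -> rpos x || rpos (- x).
Proof.
(* The positive and negative parts of x pair nonpositively, so if both were
   nonzero, bf x x would be at least 2 + 2. *)
move=> x_root.
pose xp : vec n := \row_j (if 0 <= x 0 j then x 0 j else 0).
pose xm : vec n := \row_j (if 0 <= x 0 j then 0 else - x 0 j).
have xpm : x = xp - xm.
  by apply/rowP => j; rewrite !mxE; case: ifP; rewrite ?subr0 ?sub0r ?opprK.
have xp_ge0 j : 0 <= xp 0 j by rewrite mxE; case: ifP => // /negbT; lia.
have xm_ge0 j : 0 <= xm 0 j by rewrite mxE; case: ifP => // /negbT; lia.
have [xp0|/bform_diag_ge2 xp_ge2] := eqVneq xp 0.
  by rewrite xpm xp0 sub0r opprK orbC; apply/orP; left; apply/forallP.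
have [xm0|/bform_diag_ge2 xm_ge2] := eqVneq xm 0.
  by rewrite xpm xm0 subr0; apply/orP; left; apply/forallP.
have xp_xm_le0 : bf xp xm <= 0.
  rewrite bformE; apply: sumr_le0 => j _; apply: sumr_le0 => i _.
  rewrite cartanE; case: eqVneq => [->|_].
    by rewrite !mxE; case: ifP; rewrite ?mulr0 ?mul0r.
  have := mulr_ge0 (xp_ge0 i) (xm_ge0 j).
  by case: (adj i j); rewrite ?mulr0 ?mul0r // mulrN1 mulNr oppr_le0.
move: x_root; rewrite xpm bformBl !bformBr (bformC xm xp); lia.
Qed.

Lemma root_neq0 x : bf x x = 2 -> x != 0.
Proof. by move=> x_root; apply/eqP => x0; move: x_root; rewrite x0 bform0l. Qed.

Lemma rht_gt0 x : rpos x -> x != 0 -> 0 < rht x.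
Proof.
move=> /forallP x_ge0; apply: contraNT; rewrite -leNgt => ht_le0.
have ht0 : rht x = 0 by apply/eqP; rewrite eq_le ht_le0 sumr_ge0.
by apply/eqP/rowP => j; rewrite mxE; move/psumr_eq0P: ht0 => ->.
Qed.

Lemma root_rposE x : bf x x = 2 -> rpos x = (0 < rht x).
Proof.
move=> x_root; have x_neq0 := root_neq0 x_root.
case x_pos: (rpos x); first by rewrite rht_gt0.
move: (root_sign x_root); rewrite x_pos => /rht_gt0.
by rewrite oppr_eq0 rhtN oppr_gt0 => /(_ x_neq0) /lt_gtF.
Qed.

Lemma root_rht_neq0 x : bf x x = 2 -> rht x != 0.
Proof.
move=> x_root; have x_neq0 := root_neq0 x_root.
by case/orP: (root_sign x_root) => /rht_gt0; rewrite ?oppr_eq0 ?rhtN => /(_ x_neq0); lia.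
Qed.

Lemma bform_roots_le1 u v : bf u u = 2 -> bf v v = 2 -> u != v -> bf u v <= 1.
Proof.
move=> u_root v_root; rewrite -subr_eq0 => /bform_diag_ge2.
by rewrite bformBl !bformBr (bformC v u); lia.
Qed.

Lemma bform_roots_eq2 u v : bf u u = 2 -> bf v v = 2 -> bf u v = 2 -> u = v.
Proof.
move=> u_root v_root uv2; apply/eqP; apply: contraTT isT => /(bform_roots_le1 u_root v_root).
by rewrite uv2.
Qed.

Lemma bform_roots_geN1 u v : bf u u = 2 -> bf v v = 2 -> u != - v -> -1 <= bf u v.
Proof.
move=> u_root v_root /(bform_roots_le1 u_root); rewrite bformNl bformNr opprK bformNr.
by move/(_ v_root); lia.
Qed.

Lemma bform_roots_eqN2 u v : bf u u = 2 -> bf v v = 2 -> bf u v = -2 -> u = - v.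
Proof.
move=> u_root v_root uv2; apply/eqP; apply: contraTT isT => /(bform_roots_geN1 u_root v_root).
by rewrite uv2.
Qed.

Lemma rht_neq_bform1 u v : bf u u = 2 -> bf v v = 2 -> bf u v = 1 -> rht u != rht v.
Proof.
move=> u_root v_root uv1; rewrite -subr_eq0 -rhtB; apply: root_rht_neq0.
by rewrite bformBl !bformBr (bformC v u) u_root v_root uv1.
Qed.

Lemma pairing_pos_root i x : bf x x = 2 -> rpos x -> x != alpha i -> -1 <= [< x | i >] <= 1.
Proof.
move=> x_root x_pos x_neq; rewrite bform_roots_le1 ?bform_alpha_diag // andbT.
rewrite bform_roots_geN1 ?bform_alpha_diag //; apply: contraTneq x_pos => ->.
by apply/negP => /forallP /(_ i); rewrite !mxE eqxx.
Qed.

Lemma rpos_wrefl i x : bf x x = 2 -> rpos x -> x != alpha i -> rpos (r i x).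
Proof.
move=> x_root x_pos x_neq; have /andP[_ le1] := pairing_pos_root x_root x_pos x_neq.
have x_rht : 0 < rht x by rewrite -root_rposE.
have rx_root : bf (r i x) (r i x) = 2 by rewrite bform_wrefl.
have := root_rht_neq0 rx_root; rewrite root_rposE // rht_wrefl; lia.
Qed.

(** * Orthogonal sets of positive roots *)

Implicit Types (B C : {fset vec n}).
Local Notation ws i B := (wact_set adj [:: i] B).

Definition rabs x := if rpos x then x else - x.

(* [orth_pos_roots] with roots recognised by their norm rather than as W-images
   of simple roots. *)
Definition orth_roots B :=
  (forall b, b \in B -> bf b b = 2 /\ rpos b) /\ {in B &, forall b c, b != c -> bf b c = 0}.

Lemma orth_roots_root B b : orth_roots B -> b \in B -> bf b b = 2.
Proof. by move=> [B_roots _] /B_roots []. Qed.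

Lemma orth_roots_rpos B b : orth_roots B -> b \in B -> rpos b.
Proof. by move=> [B_roots _] /B_roots []. Qed.

Lemma wact_setE s B : wact_set adj s B = [fset rabs (wact adj s b) | b in B].
Proof. by []. Qed.

Lemma rabs_pos x : rpos x -> rabs x = x.
Proof. by rewrite /rabs => ->. Qed.

Lemma rabsN x : bf x x = 2 -> rabs (- x) = rabs x.
Proof.
move=> x_root; have nx_root : bf (- x) (- x) = 2 by rewrite bformNl bformNr opprK.
rewrite /rabs (root_rposE x_root) (root_rposE nx_root) rhtN oppr_gt0 opprK.
by case: ltgtP (root_rht_neq0 x_root).
Qed.

Lemma rabs_wrefl i x : bf x x = 2 -> rabs (r i (rabs x)) = rabs (r i x).
Proof.
by move=> x_root; rewrite {2}/rabs; case: ifP => // _; rewrite wreflN rabsN ?bform_wrefl.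
Qed.

Lemma wact_set_cons i s B : (forall b, b \in B -> bf b b = 2) ->
  wact_set adj (i :: s) B = ws i (wact_set adj s B).
Proof.
move=> B_roots; rewrite !wact_setE -imfset_comp; apply: eq_in_imfset => b /B_roots b_root /=.
by rewrite rabs_wrefl ?bform_wact.
Qed.

Lemma rabs_sign x : rabs x = x \/ rabs x = - x.
Proof. by rewrite /rabs; case: ifP; [left | right]. Qed.

Lemma rabs_root x : bf x x = 2 -> bf (rabs x) (rabs x) = 2 /\ rpos (rabs x).
Proof.
move=> x_root; rewrite /rabs; case: ifP => // /negbT x_neg.
by rewrite bformNl bformNr opprK; move: (root_sign x_root); rewrite (negPf x_neg).
Qed.

Lemma wact_set_nil B : orth_roots B -> wact_set adj [::] B = B.
Proof.
move=> oB; rewrite wact_setE -[RHS]imfset_id; apply: eq_in_imfset => b bB /=.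
by rewrite rabs_pos // (orth_roots_rpos oB).
Qed.

Lemma orth_roots_ws i B : orth_roots B -> orth_roots (ws i B).
Proof.
move=> oB; rewrite wact_setE.
split=> [_ /imfsetP [b bB ->] | _ _ /imfsetP [b bB ->] /imfsetP [c cB ->]] /=.
  by apply: rabs_root; rewrite bform_wrefl (orth_roots_root oB).
move=> neq; have bc : b != c by apply: contraNneq neq => ->.
have bc0 : bf (r i b) (r i c) = 0 by rewrite bform_wrefl (proj2 oB).
by case: (rabs_sign (r i b)) => ->; case: (rabs_sign (r i c)) => ->;
  rewrite ?bformNl ?bformNr bc0 ?oppr0.
Qed.

Lemma orth_roots_wact_set s B : orth_roots B -> orth_roots (wact_set adj s B).
Proof.
move=> oB; elim: s => [|i s IHs]; first by rewrite wact_set_nil.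
by rewrite wact_set_cons => [|b]; [exact: orth_roots_ws | exact: orth_roots_root].
Qed.

Lemma ws_invol i B : orth_roots B -> ws i (ws i B) = B.
Proof.
move=> oB; rewrite -wact_set_cons => [|b]; last exact: orth_roots_root.
rewrite wact_setE -[RHS]imfset_id; apply: eq_in_imfset => b bB /=.
by rewrite wreflK rabs_pos // (orth_roots_rpos oB).
Qed.

Lemma ws_alpha i B : orth_roots B -> alpha i \in B -> ws i B = B.
Proof.
move=> oB aB; rewrite wact_setE -[RHS]imfset_id; apply: eq_in_imfset => b bB /=.
have [->|ba] := eqVneq b (alpha i).
  by rewrite wrefl_alpha rabsN ?bform_alpha_diag // rabs_pos // (orth_roots_rpos oB).
by rewrite wrefl_id ?(proj2 oB) // rabs_pos // (orth_roots_rpos oB).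
Qed.

Lemma ws_notin_alpha i B : orth_roots B -> alpha i \notin B -> ws i B = [fset r i b | b in B].
Proof.
move=> oB aB; rewrite wact_setE; apply: eq_in_imfset => b bB /=.
rewrite rabs_pos // rpos_wrefl ?(orth_roots_root oB) ?(orth_roots_rpos oB) //.
by apply: contraNneq aB => <-.
Qed.

Lemma mem_ws i B c : orth_roots B -> alpha i \notin B -> (c \in ws i B) = (r i c \in B).
Proof.
move=> oB aB; rewrite ws_notin_alpha // -{1}(wreflK i c) mem_imfset //.
exact: can_inj (wreflK i).
Qed.

Lemma ws_wreflP i B c : orth_roots B -> alpha i \notin B ->
  c \in ws i B -> exists2 b, b \in B & c = r i b.
Proof. by move=> oB aB; rewrite mem_ws // => rcB; exists (r i c); rewrite ?wreflK. Qed.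

Lemma wact_set_eq s t B : wact adj s =1 wact adj t -> wact_set adj s B = wact_set adj t B.
Proof. by move=> st; rewrite !wact_setE; apply: eq_imfset => // b; rewrite st. Qed.

Lemma wact_set_weqb s t B : weqb adj s t -> wact_set adj s B = wact_set adj t B.
Proof. by move/weqb_wact; exact: wact_set_eq. Qed.

Lemma ws_comm i j B : orth_roots B -> cartan adj i j = 0 -> ws i (ws j B) = ws j (ws i B).
Proof.
move=> oB cij; have B_roots b : b \in B -> bf b b = 2 by apply: orth_roots_root.
by rewrite -!wact_set_cons //; apply: wact_set_eq => x /=; rewrite wrefl_comm.
Qed.

Lemma ws_braid i j B : orth_roots B -> cartan adj i j = -1 ->
  ws i (ws j (ws i B)) = ws j (ws i (ws j B)).
Proof.
move=> oB cij; have B_roots b : b \in B -> bf b b = 2 by apply: orth_roots_root.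
have ws3 k l : ws k (ws l (ws k B)) = wact_set adj [:: k; l; k] B.
  by rewrite (wact_set_cons k [:: l; k]) // (wact_set_cons l [:: k]).
by rewrite !ws3; apply: wact_set_eq => x /=; rewrite wrefl_braid.
Qed.

Lemma pairing_orth_roots i B b : orth_roots B -> alpha i \notin B -> b \in B ->
  -1 <= [< b | i >] <= 1.
Proof.
move=> oB aB bB; apply: pairing_pos_root; rewrite ?(orth_roots_root oB) ?(orth_roots_rpos oB) //.
by apply: contraNneq aB => <-.
Qed.

Lemma wrefl_mem i B b : orth_roots B -> alpha i \notin B -> b \in B ->
  (r i b \in B) = ([< b | i >] == 0).
Proof.
move=> oB aB bB; have [pb0|pb_neq0] := eqVneq [< b | i >] 0; first by rewrite wrefl_id.
apply/negbTE/negP => rbB; have /andP[lb ub] := pairing_orth_roots oB aB bB.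
have rb_neq : r i b != b.
  by apply: contra_neq pb_neq0 => rbb; move: (pairing_wrefl_diag i b); rewrite rbb; lia.
move: ((proj2 oB) _ _ rbB bB rb_neq).
by rewrite bform_wrefll (orth_roots_root oB bB); move: pb_neq0; nia.
Qed.

(** * Raising a set by a simple reflection *)

Definition raises i B := exists2 x, x \in B &
  [< x | i >] = -1 /\ forall b, b \in B -> [< b | i >] = 1 -> rht x < rht b.

Lemma raises_notin_alpha i B : orth_roots B -> raises i B -> alpha i \notin B.
Proof.
move=> oB [x xB [px _]]; apply/negP => aB.
have xa : x != alpha i by apply: contra_eq_neq px => ->; rewrite bform_alpha_diag.
by move: px; rewrite (proj2 oB) // => /eqP; rewrite eq_sym oppr_eq0.
Qed.

Lemma rht_neq_succ i B b c : orth_roots B -> b \in B -> c \in B ->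
  [< b | i >] = 1 -> [< c | i >] = -1 -> rht b != rht c + 1.
Proof.
move=> oB bB cB pb pc; have bc : b != c by apply: contra_eq_neq pb => ->; rewrite pc.
have := @rht_neq_bform1 (r i b) c; rewrite bform_wrefl (orth_roots_root oB bB).
rewrite (orth_roots_root oB cB) bform_wrefll (proj2 oB) // pb pc rht_wrefl pb.
by move=> /(_ erefl erefl erefl); apply: contra => /eqP ->; rewrite addrK.
Qed.

(* r_i replaces each b with [< b | i >] = +-1 by b -+ alpha i and fixes the
   other elements, so only the moved roots enter the comparison of heights. *)
Lemma mprec_wsP i B : orth_roots B -> mprec B (ws i B) <-> raises i B.
Proof.
move=> oB; rewrite /raises.
have moved b : alpha i \notin B -> b \in B -> [< b | i >] != 0 -> r i b \in ws i B `\` B.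
  by move=> aB bB pb; rewrite in_fsetD mem_ws // wreflK bB wrefl_mem // pb.
split=> [[neq [_ [b [bBC b_min]]]] | [x xB [px x_min]]].
  have aB : alpha i \notin B by apply: contra neq => /(ws_alpha oB) ->.
  move: bBC; rewrite in_fsetD => /andP [+ bB]; rewrite mem_ws // wrefl_mem // => pb.
  have := b_min _ (moved b aB bB pb); rewrite rht_wrefl.
  have /andP[lb ub] := pairing_orth_roots oB aB bB => b_up.
  exists b => //; split => [|c cB pc]; first by move: pb; lia.
  have pc0 : [< c | i >] != 0 by rewrite pc.
  by have := b_min _ (moved c aB cB pc0); rewrite rht_wrefl pc; lia.
have aB := raises_notin_alpha oB (ex_intro2 _ _ x xB (conj px x_min)).
have px0 : [< x | i >] != 0 by rewrite px.
have [m [mB /eqP pm] m_min] :=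
  fset_arg_min (P := fun b => [< b | i >] == -1) (@rht n) xB (introT eqP px).
split; [|split].
- by apply/eqP => eqB; have := xB; rewrite {1}eqB mem_ws // wrefl_mem // px.
- by exists (r i x); exact: moved.
exists m; split; first by rewrite in_fsetD mem_ws // wrefl_mem // pm mB.
move=> c; rewrite in_fsetD => /andP [cB /(ws_wreflP oB aB) [b bB eq_c]].
move: cB; rewrite eq_c wrefl_mem // rht_wrefl => pb.
have /andP[lb ub] := pairing_orth_roots oB aB bB.
have [pb1|pbN1] : [< b | i >] = 1 \/ [< b | i >] = -1 by move: pb; lia.
  have := m_min x xB (introT eqP px); have := x_min b bB pb1.
  by have := rht_neq_succ oB bB mB pb1 pm; rewrite pb1; lia.
by have := m_min b bB (introT eqP pbN1); rewrite pbN1; lia.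
Qed.

Lemma mprec_asym B C : mprec B C -> mprec C B -> False.
Proof.
move=> [_ [_ [b [bBC b_min]]]] [_ [_ [c [cCB c_min]]]].
by move: (b_min c cCB) (c_min b bBC); lia.
Qed.

Lemma raises_asym i B : orth_roots B -> raises i B -> raises i (ws i B) -> False.
Proof.
move=> oB /(mprec_wsP _ oB) BC; rewrite -(mprec_wsP _ (orth_roots_ws i oB)) ws_invol //.
exact: mprec_asym.
Qed.

Lemma raises_ws i j B w : orth_roots B -> alpha j \notin B -> w \in B -> [< r j w | i >] = -1 ->
  (forall b, b \in B -> [< r j b | i >] = 1 -> rht (r j w) < rht (r j b)) ->
  raises i (ws j B).
Proof.
move=> oB aB wB pw w_min; exists (r j w); first by rewrite mem_ws // wreflK.
by split=> // _ /(ws_wreflP oB aB) [b bB ->]; exact: w_min.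
Qed.

Lemma raises_ws_of_pos_min i B z : orth_roots B -> alpha i \notin B -> z \in B ->
  [< z | i >] = 1 -> (forall b, b \in B -> [< b | i >] = -1 -> rht z <= rht b) ->
  raises i (ws i B).
Proof.
move=> oB aB zB pz z_min; apply: (raises_ws oB aB zB) => [|b bB].
  by rewrite pairing_wrefl_diag pz.
rewrite pairing_wrefl_diag => /eqP; rewrite eqr_oppLR => /eqP pb.
by have := z_min b bB pb; rewrite !rht_wrefl pz pb; lia.
Qed.

Lemma raises_or_lowers i B : orth_roots B -> ws i B != B -> raises i B \/ raises i (ws i B).
Proof.
move=> oB ws_neq; have aB : alpha i \notin B by apply: contra ws_neq => /(ws_alpha oB) ->.
have [x xB px] : exists2 x, x \in B & [< x | i >] != 0.
  apply/hasP; apply: contraNT ws_neq => /hasPn fixed.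
  rewrite ws_notin_alpha // -[X in _ == X]imfset_id; apply/eqP/eq_in_imfset => b /fixed.
  by rewrite negbK => /eqP /wrefl_id.
have [m [mB pm] m_min] :=
  fset_arg_min (P := fun b => [< b | i >] != 0) (@rht n) xB px.
have /andP[lm um] := pairing_orth_roots oB aB mB.
have [pm1|pmN1] : [< m | i >] = 1 \/ [< m | i >] = -1 by move: pm; lia.
  right; apply: (raises_ws_of_pos_min oB aB mB pm1) => b bB pb.
  by have := m_min b bB; rewrite pb => /(_ isT).
have [/hasP [z zB /andP [/eqP pz /eqP hz]] | /hasPn no_tie] :=
  boolP (has (fun z => ([< z | i >] == 1) && (rht z == rht m)) B).
  right; apply: (raises_ws_of_pos_min oB aB zB pz) => b bB pb.
  by have := m_min b bB; rewrite pb hz => /(_ isT).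
left; exists m => //; split => // b bB pb.
by have := m_min b bB; have := no_tie b bB; rewrite pb eqxx /= => ne /(_ isT); lia.
Qed.

(** * Two simple reflections *)

Lemma alpha_add_root i j : cartan adj i j = -1 ->
  bf (alpha i + alpha j) (alpha i + alpha j) = 2.
Proof. by move=> cij; rewrite bformDl !bformDr !bform_alpha cij cartanC cij !cartan_diag. Qed.

Lemma adj_pairings_neg i j B b : cartan adj i j = -1 -> orth_roots B -> b \in B ->
  [< b | i >] = -1 -> [< b | j >] = -1 -> False.
Proof.
move=> cij oB bB pib pjb; have := orth_roots_rpos oB bB.
have -> : b = - (alpha i + alpha j).
  apply: bform_roots_eqN2 (alpha_add_root cij) _; first exact: orth_roots_root oB bB.
  by rewrite bformDr pib pjb.
by rewrite root_rposE ?bformNl ?bformNr ?opprK ?alpha_add_root // rhtN rhtD !rht_alpha.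
Qed.

Lemma adj_pairings_pos i j B b : cartan adj i j = -1 -> orth_roots B -> raises i B ->
  b \in B -> [< b | i >] = 1 -> [< b | j >] = 1 -> False.
Proof.
move=> cij oB [x xB [pix x_min]] bB pib pjb.
have eb : b = alpha i + alpha j.
  apply: bform_roots_eq2 (alpha_add_root cij) _; first exact: orth_roots_root oB bB.
  by rewrite bformDr pib pjb.
have x_rht : 0 < rht x by rewrite -root_rposE ?(orth_roots_rpos oB) ?(orth_roots_root oB).
have xb : x != b by apply: contra_eq_neq pix => ->; rewrite pib.
have := (proj2 oB) x b xB bB xb; rewrite eb bformDr pix => pjx.
have := @rht_neq_bform1 x (alpha j) (orth_roots_root oB xB) (bform_alpha_diag j).
by have := x_min b bB pib; rewrite eb rhtD !rht_alpha; lia.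
Qed.

Lemma adj_rht_neq_add2 (k l : 'I_n) B b c : cartan adj k l = -1 -> orth_roots B ->
  b \in B -> c \in B -> [< b | k >] = 0 -> [< c | k >] = 0 ->
  [< b | l >] = 1 -> [< c | l >] = -1 -> rht b != rht c + 2.
Proof.
move=> ckl oB bB cB pkb pkc plb plc.
have bc : b != c by apply: contra_eq_neq plb => ->; rewrite plc.
have v_root : bf (b - c - alpha l) (b - c - alpha l) = 2.
  rewrite !(bformBl, bformBr) (bformC c b) (bformC (alpha l) b) (bformC (alpha l) c).
  have := orth_roots_root oB bB; have := orth_roots_root oB cB.
  by rewrite (proj2 oB b c) // plb plc bform_alpha_diag; lia.
have := rht_neq_bform1 v_root (bform_alpha_diag k).
rewrite !bformBl pkb pkc bform_alpha cartanC ckl !rhtB !rht_alpha => /(_ erefl).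
by apply: contra => /eqP ->; lia.
Qed.

Lemma raises_ws_adj i j B : cartan adj i j = -1 -> orth_roots B ->
  raises i B -> raises j B -> raises i (ws j B).
Proof.
move=> cij oB ri rj; have cji : cartan adj j i = -1 by rewrite cartanC.
have [aiB ajB] := (raises_notin_alpha oB ri, raises_notin_alpha oB rj).
have range b : b \in B -> (-1 <= [< b | i >] <= 1) && (-1 <= [< b | j >] <= 1).
  by move=> bB; rewrite (pairing_orth_roots oB aiB bB) (pairing_orth_roots oB ajB bB).
case: (ri) => x xB [pix x_min]; case: (rj) => y yB [pjy y_min].
have /andP[/andP[? ?] /andP[? ?]] := range x xB; have /andP[/andP[? ?] /andP[? ?]] := range y yB.
have pjx : [< x | j >] != -1 by apply/eqP => /(adj_pairings_neg cij oB xB pix).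
have piy : [< y | i >] != -1 by apply/eqP => /(adj_pairings_neg cij oB yB)/(_ pjy).
have hb b : b \in B -> [< b | i >] + [< b | j >] = 1 ->
    [/\ [< b | i >] = 1, [< b | j >] = 0 & rht x + 1 < rht b] \/
    [/\ [< b | i >] = 0, [< b | j >] = 1, rht y + 1 < rht b &
         [< y | i >] = 0 -> rht b != rht y + 2].
  move=> bB sb; have /andP[/andP[? ?] /andP[? ?]] := range b bB.
  have [[pib pjb] | [pib pjb]] :
      [< b | i >] = 1 /\ [< b | j >] = 0 \/ [< b | i >] = 0 /\ [< b | j >] = 1 by lia.
    left; split=> //; have := x_min b bB pib; have := rht_neq_succ oB bB xB pib pix; lia.
  right; split=> //; have := y_min b bB pjb; have := rht_neq_succ oB bB yB pjb pjy; first lia.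
  by move=> ? ? yi0; apply: adj_rht_neq_add2 cij oB bB yB pib yi0 pjb pjy.
(* The witness is x or y, whichever has the lower image under r_j. *)
have [w [wB pw w_min]] : exists w, [/\ w \in B, [< w | i >] + [< w | j >] = -1 &
    forall b, b \in B -> [< b | i >] + [< b | j >] = 1 ->
      rht w - [< w | j >] < rht b - [< b | j >]].
  have [xj1|xj0] := eqVneq [< x | j >] 1.
    have yx := y_min x xB xj1.
    have yi0 : [< y | i >] = 0 by have [/(x_min y yB)|] := eqVneq [< y | i >] 1; lia.
    exists y; split=> // [|b bB /(hb b bB) [[? ? ?] | [? ? ? /(_ yi0)]]]; lia.
  have [yi1|yi0] := eqVneq [< y | i >] 1.
    have xy := x_min y yB yi1.
    exists x; split=> // [|b bB /(hb b bB) [[? ? ?] | [? ? ? _]]]; lia.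
  have [le_xy|lt_yx] := lerP (rht x) (rht y).
    exists x; split=> // [|b bB /(hb b bB) [[? ? ?] | [? ? ? _]]]; lia.
  have yi0' : [< y | i >] = 0 by lia.
  exists y; split=> // [|b bB /(hb b bB) [[? ? ?] | [? ? ? /(_ yi0')]]]; lia.
apply: (raises_ws oB ajB wB) => [|b bB]; rewrite !pairing_wrefl cji ?rht_wrefl; first lia.
by move=> sb; apply: w_min; rewrite //; lia.
Qed.

Lemma raises_ws2_adj i j B : cartan adj i j = -1 -> orth_roots B ->
  raises i B -> raises j B -> raises j (ws i (ws j B)).
Proof.
move=> cij oB ri rj; have cji : cartan adj j i = -1 by rewrite cartanC.
have [aiB ajB] := (raises_notin_alpha oB ri, raises_notin_alpha oB rj).
have oC := orth_roots_ws j oB.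
have aiC := raises_notin_alpha oC (raises_ws_adj cij oB ri rj).
case: (ri) => x xB [pix x_min].
have /andP[? ?] := pairing_orth_roots oB ajB xB.
have pjx : [< x | j >] != -1 by apply/eqP => /(adj_pairings_neg cij oB xB pix).
have rxC : r j x \in ws j B by rewrite mem_ws // wreflK.
apply: (raises_ws oC aiC rxC) => [|_ /(ws_wreflP oB ajB) [b bB ->]].
  by rewrite !pairing_wrefl cij cji cartan_diag; lia.
rewrite !pairing_wrefl !rht_wrefl !pairing_wrefl cij cji cartan_diag.
have /andP[? ?] := pairing_orth_roots oB ajB bB.
move=> pb; have pib : [< b | i >] = 1 by lia.
have pjb : [< b | j >] != 1 by apply/eqP => /(adj_pairings_pos cij oB ri bB pib).
have := x_min b bB pib; have := rht_neq_succ oB bB xB pib pix.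
have [xj0|] := eqVneq [< x | j >] 0; last lia.
have [bj0|] := eqVneq [< b | j >] 0; last lia.
by have := adj_rht_neq_add2 cji oB bB xB bj0 xj0 pib pix; lia.
Qed.

Lemma comm_pairings_eq i j B b x : cartan adj i j = 0 -> orth_roots B ->
  b \in B -> x \in B -> [< b | i >] = 1 -> [< b | j >] = 1 ->
  [< x | i >] = -1 -> [< x | j >] = -1 -> x = b - alpha i - alpha j.
Proof.
move=> cij oB bB xB pib pjb pix pjx.
have bx : b != x by apply: contra_eq_neq pib => ->; rewrite pix.
have := orth_roots_root oB bB; have := (proj2 oB) b x bB xB bx => bx0 b_root.
apply/esym/bform_roots_eq2; [| exact: orth_roots_root oB xB |].
  rewrite !(bformBl, bformBr) (bformC (alpha i) b) (bformC (alpha j) b) (bformC (alpha j)).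
  by move: b_root; rewrite !bform_alpha cij !cartan_diag pib pjb; lia.
by rewrite !bformBl (bformC (alpha i)) (bformC (alpha j)) bx0 pix pjx.
Qed.

Lemma raises_ws_comm i j B : cartan adj i j = 0 -> orth_roots B -> alpha j \notin B ->
  (forall g, g \in ws j B -> g - alpha i + alpha j \in ws j B ->
     ws i (ws j B) = ws j (ws j B)) ->
  ws i B != ws j B -> raises i B -> raises i (ws j B).
Proof.
move=> cij oB ajB adm neq [x xB [pix x_min]].
have cji : cartan adj j i = 0 by rewrite cartanC.
apply: (raises_ws oB ajB xB) => [|b bB]; rewrite !pairing_wrefl cji mulr0 subr0 ?rht_wrefl //.
move=> pib; have xb := x_min b bB pib; have bx := rht_neq_succ oB bB xB pib pix.
have /andP[? ?] := pairing_orth_roots oB ajB xB; have /andP[? ?] := pairing_orth_roots oB ajB bB.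
have [//|ge] := ltrP (rht x - [< x | j >]) (rht b - [< b | j >]).
(* The only failure is x = b - alpha i - alpha j, which admissibility rules out. *)
have [pjx pjb] : [< x | j >] = -1 /\ [< b | j >] = 1 by lia.
have ex := comm_pairings_eq cij oB bB xB pib pjb pix pjx.
have rbC : r j b \in ws j B by rewrite mem_ws // wreflK.
have rbC' : r j b - alpha i + alpha j \in ws j B.
  suff -> : r j b - alpha i + alpha j = r j x by rewrite mem_ws // wreflK.
  by rewrite /wrefl pjb pjx ex; apply/rowP => k; rewrite !mxE; ring.
move: (adm _ rbC rbC'); rewrite ws_invol // => /(congr1 (fun C => ws i C)).
by rewrite (ws_invol i (orth_roots_ws j oB)) => eq_ji; rewrite eq_ji eqxx in neq.
Qed.

Lemma orth_pos_roots_orth_roots B : orth_pos_roots adj B -> orth_roots B.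
Proof.
move=> [B_pos B_orth]; split=> // b /B_pos [[t [i <-]] b_pos]; split=> //.
by rewrite bform_wact bform_alpha_diag.
Qed.

(** * Depth in the orbit of B0 *)

Section Orbit.
Variable B0 : {fset vec n}.
Hypothesis oB0 : orth_roots B0.
Implicit Types m k : nat.

Definition reach B m := [exists t : m.-tuple 'I_n, wact_set adj t B0 == B].

Definition depth B m := reach B m /\ forall k, (k < m)%N -> ~~ reach B k.

Lemma orth_roots_reach B m : reach B m -> orth_roots B.
Proof. by case/existsP => t /eqP <-; exact: orth_roots_wact_set. Qed.

Lemma reach_orbit B m : reach B m -> in_Borbit adj B0 B.
Proof. by case/existsP => t /eqP <-; exists t. Qed.

Lemma reach_ws i B m : reach B m -> reach (ws i B) m.+1.
Proof.
case/existsP => t /eqP <-; apply/existsP; exists [tuple of i :: t].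
by rewrite /= (wact_set_cons i t) // => b; exact: orth_roots_root.
Qed.

Lemma reach_ws_inv i B m : orth_roots B -> reach (ws i B) m -> reach B m.+1.
Proof. by move=> oB /(reach_ws i); rewrite ws_invol. Qed.

Lemma depth_min B m k : depth B m -> reach B k -> (m <= k)%N.
Proof. by move=> [_ m_min] rk; rewrite leqNgt; apply: contraTN rk => /m_min. Qed.

Lemma depth_uniq B m k : depth B m -> depth B k -> m = k.
Proof. by move=> dm dk; apply/eqP; rewrite eqn_leq (depth_min dm dk.1) (depth_min dk dm.1). Qed.

Lemma depth_exists B m : reach B m -> exists k, depth B k.
Proof.
move=> rm; have ex : exists k, reach B k by exists m.
case: (ex_minnP ex) => k rk k_min; exists k; split=> // l.
by rewrite ltnNge; apply: contra => /k_min.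
Qed.

Lemma orbit_depth B : in_Borbit adj B0 B -> exists m, depth B m.
Proof. by case=> s ->; apply: (@depth_exists _ (size s)); apply/existsP; exists (in_tuple s). Qed.

Lemma depth_ws i B m k : depth B m -> depth (ws i B) k -> (k <= m.+1)%N /\ (m <= k.+1)%N.
Proof.
move=> dB dC; split; first exact: depth_min dC (reach_ws i dB.1).
exact: depth_min dB (reach_ws_inv (orth_roots_reach dB.1) dC.1).
Qed.

Lemma depth0 B : depth B 0 -> B = B0.
Proof. by case=> /existsP [t /eqP <-] _; rewrite tuple0 wact_set_nil. Qed.

Lemma depth_pred B m : depth B m.+1 -> exists j, depth (ws j B) m.
Proof.
move=> dB; case/existsP: (dB.1) => /tupleP [j t] /eqP eB; exists j.
have oC : orth_roots (wact_set adj t B0) by exact: orth_roots_wact_set.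
have rC : reach (ws j B) m.
  apply/existsP; exists t; rewrite -eB /= (wact_set_cons j t) ?ws_invol //.
  by move=> b; exact: orth_roots_root.
have [k dC] := depth_exists rC; have k_le := depth_min dC rC.
by have [_] := depth_ws dB dC; rewrite ltnS => m_le; rewrite -(@anti_leq k m) ?k_le.
Qed.

Hypothesis B0_adm : admissible adj B0.
Hypothesis B0_max : forall C, in_Borbit adj B0 C -> ~ mlt adj B0 B0 C.

Definition descent_raises m :=
  forall B i k, depth B m -> depth (ws i B) k -> (k < m)%N -> raises i B.

Definition level_fixed m := forall B i, depth B m -> depth (ws i B) m -> ws i B = B.

Lemma raises_depth_pred m B i : level_fixed m -> descent_raises m.+1 ->
  depth B m -> raises i B -> depth (ws i B) m.-1 /\ (0 < m)%N.
Proof.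
move=> fixed_m desc dB ri; have oB := orth_roots_reach dB.1.
have [k dC] := depth_exists (reach_ws i dB.1); have [k_le m_le] := depth_ws dB dC.
have [km|km] := eqVneq k m.
  by rewrite km in dC; move: (ri); rewrite -{1}(fixed_m B i dB dC) => /(raises_asym oB ri).
have [km1|km1] := eqVneq k m.+1.
  have dB' : depth (ws i (ws i B)) m by rewrite ws_invol.
  by rewrite km1 in dC; case: (raises_asym oB ri (desc _ i m dC dB' (ltnSn m))).
suff -> : m = k.+1 by [].
by apply/eqP; rewrite eqn_leq m_le; move: k_le km km1; lia.
Qed.

(* For a descent j <> i of X, r_j X < r_i r_j X (and r_i r_j X < r_j r_i r_j X
   when i and j are joined); by induction these steps lower the depth, giving a
   word of length l for r_i X. *)
Lemma raises_depth_lt l X i k : (forall m, (m < l)%N -> level_fixed m) ->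
  (forall m, (m <= l)%N -> descent_raises m) ->
  depth X l -> raises i X -> depth (ws i X) k -> (k < l)%N.
Proof.
move=> fixed desc dX ri dY; rewrite ltnNge; apply/negP => l_le.
have oX := orth_roots_reach dX.1.
case: l fixed desc dX l_le => [|m] fixed desc dX l_le.
  have X0 := depth0 dX; subst X; apply: (B0_max (reach_orbit (reach_ws i dX.1))).
  apply: mlt_step; split; first by exists [::]; rewrite wact_set_nil.
  by exists i; split=> //; apply/(mprec_wsP i oB0).
have not_reach : ~~ reach (ws i X) m by apply/negP => /(depth_min dY); lia.
have [j dZ] := depth_pred dX.
have rj : raises j X := desc m.+1 (leqnn _) X j m dX dZ (ltnSn m).
have ij : i != j.
  by apply: contraTneq l_le => eq_ij; rewrite eq_ij in dY; rewrite (depth_uniq dY dZ) ltnn.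
have pred_m := raises_depth_pred (fixed m (ltnSn m)) (desc m.+1 (leqnn _)).
have [cij|cij] : cartan adj i j = 0 \/ cartan adj i j = -1.
  by rewrite cartanE (negPf ij); case: (adj i j); [right | left].
  have neq : ws i X != ws j X.
    by apply: contraTneq l_le => eq_ij; rewrite eq_ij in dY; rewrite (depth_uniq dY dZ) ltnn.
  have adm g : g \in ws j X -> g - alpha i + alpha j \in ws j X ->
      ws i (ws j X) = ws j (ws j X).
    apply: (B0_adm (reach_orbit dZ.1)); rewrite /nonadj (negPf ij) /=.
    by move: cij; rewrite cartanE (negPf ij); case: (adj i j).
  have aj := raises_notin_alpha oX rj.
  have [dW m_gt0] := pred_m _ _ dZ (raises_ws_comm cij oX aj adm neq ri).
  move/negP: not_reach; apply; rewrite -(prednK m_gt0).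
  by apply: (reach_ws_inv (i := j) (orth_roots_ws i oX)); rewrite -ws_comm //; exact: dW.1.
have [dW m_gt0] := pred_m _ _ dZ (raises_ws_adj cij oX ri rj).
have desc_m : descent_raises m.-1.+1 by apply: desc; rewrite prednK // ltnW.
have fixed_m1 := fixed m.-1 (leq_ltn_trans (leq_pred m) (ltnSn m)).
have [dV m1_gt0] := raises_depth_pred fixed_m1 desc_m dW (raises_ws2_adj cij oX ri rj).
move/negP: not_reach; apply; rewrite -(prednK m_gt0) -(prednK m1_gt0).
apply: (reach_ws_inv (i := j) (orth_roots_ws i oX)).
apply: (reach_ws_inv (i := i) (orth_roots_ws j (orth_roots_ws i oX))).
by rewrite ws_braid //; exact: dV.1.
Qed.

Lemma depth_graded m : descent_raises m /\ level_fixed m.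
Proof.
elim/ltn_ind: m => m IH.
have desc_m : descent_raises m.
  move=> B i k dB dC k_lt; have oB := orth_roots_reach dB.1.
  have neq : ws i B != B.
    by apply: contraTneq k_lt => eqC; rewrite eqC in dC; rewrite (depth_uniq dB dC) ltnn.
  case: (raises_or_lowers oB neq) => // ri'.
  have dB' : depth (ws i (ws i B)) m by rewrite ws_invol.
  have fixed_lt m' : (m' < k)%N -> level_fixed m'.
    by move=> lt; exact: (IH m' (ltn_trans lt k_lt)).2.
  have desc_le m' : (m' <= k)%N -> descent_raises m'.
    by move=> le; exact: (IH m' (leq_ltn_trans le k_lt)).1.
  by have := raises_depth_lt fixed_lt desc_le dC ri' dB'; lia.
split=> // B i dB dC; have oB := orth_roots_reach dB.1.
have [//|neq] := eqVneq (ws i B) B; exfalso.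
have fixed_lt m' : (m' < m)%N -> level_fixed m' by move=> lt; exact: (IH m' lt).2.
have desc_le m' : (m' <= m)%N -> descent_raises m'.
  by rewrite leq_eqVlt => /orP [/eqP -> // | lt]; exact: (IH m' lt).1.
have dB' : depth (ws i (ws i B)) m by rewrite ws_invol.
case: (raises_or_lowers oB neq) => [ri | ri'].
  by have := raises_depth_lt fixed_lt desc_le dB ri dC; rewrite ltnn.
by have := raises_depth_lt fixed_lt desc_le dC ri' dB'; rewrite ltnn.
Qed.

Lemma raises_depth B i m : depth B m -> raises i B -> depth (ws i B) m.-1 /\ (0 < m)%N.
Proof. exact: raises_depth_pred (depth_graded m).2 (depth_graded m.+1).1. Qed.

Lemma mlt_orbit B C : mlt adj B0 B C -> in_Borbit adj B0 B.
Proof. by elim=> [? ? [] | ? ? ? _ ]. Qed.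

Lemma mlt_depth B C m k : mlt adj B0 B C -> depth B m -> depth C k -> (k < m)%N.
Proof.
move=> BC; elim: BC m k => {B C} [B C [_ [j [-> BC]]] | B C D BC IHBC CD IHCD] m k dB dC.
  have [dC' m_gt0] := raises_depth dB (proj1 (mprec_wsP j (orth_roots_reach dB.1)) BC).
  by rewrite (depth_uniq dC dC') prednK.
have [l dD] := orbit_depth (mlt_orbit CD).
exact: ltn_trans (IHCD _ _ dD dC) (IHBC _ _ dB dD).
Qed.

Lemma reach_wlen s B : wact_set adj s B0 = B -> reach B (wlen adj s).
Proof.
move=> eB; have [t eq_ts] := wlen_witness s.
by apply/existsP; exists t; rewrite (wact_set_weqb _ eq_ts) eB.
Qed.

Lemma minimal_for_depth B s : minimal_for adj B0 B s -> depth B (wlen adj s).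
Proof.
move=> [eB s_min]; split=> [|k k_lt]; first exact: reach_wlen.
apply/negP => /existsP [t /eqP /s_min].
by move/leq_trans/(_ (wlen_size t)); rewrite size_tuple leqNgt k_lt.
Qed.

Lemma wact_set_consB0 i s : wact_set adj (i :: s) B0 = ws i (wact_set adj s B0).
Proof. by rewrite wact_set_cons // => b; exact: orth_roots_root. Qed.

Lemma mlt_ws_of_minimal_descent B s i : minimal_for adj B0 B s ->
  (wlen adj (i :: s) < wlen adj s)%N -> mlt adj B0 B (ws i B).
Proof.
move=> ms lt; have dB := minimal_for_depth ms.
have rC : reach (ws i B) (wlen adj (i :: s)).
  by apply: reach_wlen; rewrite wact_set_consB0 ms.1.
have [k dC] := depth_exists rC.
have ri := (depth_graded _).1 B i k dB dC (leq_ltn_trans (depth_min dC rC) lt).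
apply: mlt_step; split; first by exists s; rewrite ms.1.
by exists i; split=> //; apply/(mprec_wsP i (orth_roots_reach dB.1)).
Qed.

Lemma minimal_descent_of_mlt_ws B s i :
  minimal_for adj B0 B s -> mlt adj B0 B (ws i B) ->
  exists s', wlen adj s' = wlen adj s /\ wact_set adj s' B0 = B /\
             (wlen adj (i :: s') < wlen adj s')%N.
Proof.
move=> ms BC; have dB := minimal_for_depth ms; have oB := orth_roots_reach dB.1.
have [k dC] := depth_exists (reach_ws i dB.1).
have k_lt := mlt_depth BC dB dC; have [_ s_le] := depth_ws dB dC.
have ek : wlen adj s = k.+1 by apply/eqP; rewrite eqn_leq s_le k_lt.
case/existsP: dC.1 => t /eqP et.
have eB : wact_set adj (i :: t) B0 = B by rewrite wact_set_consB0 et ws_invol.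
have len_it : wlen adj (i :: t) = wlen adj s.
  apply/eqP; rewrite eqn_leq (depth_min dB (reach_wlen eB)) andbT ek.
  by have := wlen_size (i :: t); rewrite /= size_tuple.
exists (i :: t); split=> //; split=> //; rewrite len_it ek ltnS.
have := @wlen_le (i :: i :: t) t; rewrite size_tuple; apply.
by apply/forallP => j /=; rewrite wreflK.
Qed.

End Orbit.

End RootSystem.

Theorem lemma3p8 (n : nat) (adj : rel 'I_n)
  (adj_sym : symmetric adj) (adj_irr : irreflexive adj)
  (spherical : forall x : vec n, x != 0 -> 0 < bform adj x x)
  (B0 : {fset vec n})
  (hB0 : orth_pos_roots adj B0)
  (hadm : admissible adj B0)
  (hmax : forall C, in_Borbit adj B0 C -> ~ mlt adj B0 B0 C)
  (huniq : forall C, in_Borbit adj B0 C ->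
     (forall D, in_Borbit adj B0 D -> ~ mlt adj B0 C D) -> C = B0) :
  (forall B, in_Borbit adj B0 B ->
   forall s, minimal_for adj B0 B s ->
   forall i : 'I_n, (wlen adj (i :: s) < wlen adj s)%N ->
     mlt adj B0 B (wact_set adj [:: i] B))
  /\
  (forall B, in_Borbit adj B0 B ->
   forall s s', minimal_for adj B0 B s -> minimal_for adj B0 B s' ->
     wlen adj s = wlen adj s' /\
     forall i : 'I_n, mlt adj B0 B (wact_set adj [:: i] B) ->
       exists s'', wlen adj s'' = wlen adj s /\ wact_set adj s'' B0 = B /\
                   (wlen adj (i :: s'') < wlen adj s'')%N).
Proof.
have oB0 := orth_pos_roots_orth_roots adj_sym hB0.
split=> [B _ s ms i | B _ s s' ms ms'].
  exact: (mlt_ws_of_minimal_descent adj_sym spherical oB0 hadm hmax).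
split; first by apply/eqP; rewrite eqn_leq (ms.2 _ ms'.1) (ms'.2 _ ms.1).
by move=> i; exact: (minimal_descent_of_mlt_ws adj_sym spherical oB0 hadm hmax ms).
Qed.
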